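(* Let $N\ge2$ and for $u=(u_1,\dots,u_N)$, $v=(v_1,\dots,v_N)$ define the $N\times N$ matrices (indices mod $N$) $U(u,\lambda)=\lambda\sum_{k=1}^N E_{k+1,k}+\sum_{k=1}^N u_kE_{kk}$, $V(v,\lambda)=I+\lambda^{-1}\sum_{k=1}^N v_kE_{k,k+1}$. Then the set of pairs $(U(u,\lambda),V(v,\lambda))$ is a Poisson submanifold of $\mathbf{g}=g\oplus g$ equipped with PB$(\mathbf{A},\mathbf{B},\mathbf{C},\mathbf{D})$, where the operators have components $\mathbf{A}=\begin{pmatrix}A&-B\\ C&A\end{pmatrix}$, $\mathbf{B}=\begin{pmatrix}B&B\\ B&-C\end{pmatrix}$, $\mathbf{C}=\begin{pmatrix}C&C\\ C&-B\end{pmatrix}$, $\mathbf{D}=\begin{pmatrix}D&-C\\ B&D\end{pmatrix}$.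
   Context: $E_{ij}$ are matrix units. $g$ is the twisted loop algebra of formal Laurent series $u(\lambda)=\sum_{p\le p_0}\sum_{i-j\equiv p\ (\mathrm{mod}\ N)}\lambda^pu^{(p)}_{ij}E_{ij}$ with form $\langle u,v\rangle=\mathrm{tr}(u(\lambda)v(\lambda))_0$ (coefficient of $\lambda^0$). $g_k$: elements containing only $\lambda^k$; $g_\pm=\bigoplus_{\pm k>0}g_k$; $P_+,P_-,P_0$ projections onto $g_+,g_-,g_0$; $R_0=P_+-P_-$; $\Pi(E_{jj})=\sum_k\pi_{jk}E_{kk}$ with $\pi_{jk}=1$ ($j>k$), $-1$ ($j<k$), $0$ ($j=k$), extended as $\Pi\circ P_0$; $A=\frac12(R_0+\Pi)$, $D=\frac12(R_0-\Pi)$, $B=\frac12(P_0-\Pi)$, $C=\frac12(P_0+\Pi)$. $\mathbf{g}=g\oplus g$ with componentwise multiplication and form $\langle\langle\mathbf{u},\mathbf{v}\rangle\rangle=\sum_k\langle u_k,v_k\rangle$; a matrix of operators $(X_{ij})$ acts by $(\mathbf{X}(\mathbf{u}))_i=\sum_jX_{ij}(u_j)$. For smooth $\Phi$ on $\mathbf{g}$, $\nabla_j\Phi$ is the $j$-th gradient component, $d_j\Phi=u_j\nabla_j\Phi$, $d'_j\Phi=\nabla_j\Phi\,u_j$, and PB$(\mathbf{A},\mathbf{B},\mathbf{C},\mathbf{D})$ is $\{\Phi,\Psi\}=\sum_{i,j}\big(\langle A_{ij}(d'_j\Phi),d'_i\Psi\rangle-\langle D_{ij}(d_j\Phi),d_i\Psi\rangle+\langle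 B_{ij}(d_j\Phi),d'_i\Psi\rangle-\langle C_{ij}(d'_j\Phi),d_i\Psi\rangle\big)$. A Poisson submanifold is one to which all Hamiltonian vector fields of the bracket are tangent. *)

From HB Require Import structures.
From mathcomp Require Import all_boot all_order all_algebra.
From mathcomp Require Import zify.
From mathcomp Require Export reals.
Set Implicit Arguments. Unset Strict Implicit. Unset Printing Implicit Defensive.
Import Order.TTheory GRing.Theory Num.Theory.
Local Open Scope ring_scope.

(* The loop algebra g: formal Laurent series u(lambda) = sum_{p <= p0}      *)
(* lambda^p u^(p), u^(p) in 'M[R]_N.  An element is stored as its           *)
(* coefficient function together with an upper bound p0 on the degrees.    *)
(* The twisting condition (u^(p)_{ij} = 0 unless i - j = p mod N) is the    *)
(* separate predicate [twisted]; g = {u : loop | twisted u}.               *)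

Section Loop.
Variables (R : fieldType) (N : nat).

Record loop := Loop {
  coef : int -> 'M[R]_N;
  top : int;
  topP : forall p : int, top < p -> coef p = 0 }.

Definition twisted (u : loop) : Prop :=
  forall (p : int) (i j : 'I_N),
    ~ (N%:Z %| (i%:Z - j%:Z - p))%Z -> coef u p i j = 0.

Definition tnat (z : int) : nat := if z is Posz n then n else 0%N.

(* Cauchy product: (uv)^(p) = sum_{p - top v <= q <= top u} u^(q) v^(p-q) *)
Definition mul_coef (u v : loop) (p : int) : 'M[R]_N :=
  \sum_(k < tnat (top u + top v - p + 1))
     coef u (top u - k%:Z) *m coef v (p - top u + k%:Z).

Lemma mul_topP (u v : loop) (p : int) :
  top u + top v < p -> mul_coef u v p = 0.
Proof.
move=> H; rewrite /mul_coef.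
have -> : tnat (top u + top v - p + 1) = 0%N.
  rewrite /tnat; case E: (top u + top v - p + 1) => [n|n] //.
  have : (Posz n <= 0)%R by rewrite -E; lia.
  by rewrite lez_nat leqn0 => /eqP.
by rewrite big_ord0.
Qed.

Definition lmul (u v : loop) : loop := Loop (@mul_topP u v).

Lemma add_topP (u v : loop) (p : int) :
  Num.max (top u) (top v) < p -> coef u p + coef v p = 0.
Proof.
rewrite gt_max => /andP[Hu Hv]; by rewrite (topP Hu) (topP Hv) addr0.
Qed.
Definition ladd (u v : loop) : loop := Loop (@add_topP u v).

Lemma opp_topP (u : loop) (p : int) : top u < p -> - coef u p = 0.
Proof. by move=> H; rewrite (topP H) oppr0. Qed.
Definition lopp (u : loop) : loop := Loop (@opp_topP u).

Lemma scale_topP (c : R) (u : loop) (p : int) : top u < p -> c *: coef u p = 0.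
Proof. by move=> H; rewrite (topP H) scaler0. Qed.
Definition lscale (c : R) (u : loop) : loop := Loop (@scale_topP c u).

Definition form (u v : loop) : R := \tr (coef (lmul u v) 0).

Lemma Pplus_topP (u : loop) (p : int) :
  top u < p -> (if 0 < p then coef u p else 0) = 0.
Proof. by move=> H; rewrite (topP H); case: ifP. Qed.
Definition Pplus (u : loop) : loop := Loop (@Pplus_topP u).

Lemma Pminus_topP (u : loop) (p : int) :
  0 < p -> (if p < 0 then coef u p else 0) = 0.
Proof. by move=> H; case: ifP => // H'; lia. Qed.
Definition Pminus (u : loop) : loop := Loop (@Pminus_topP u).

Lemma P0_topP (u : loop) (p : int) :
  0 < p -> (if p == 0 then coef u p else 0) = 0.
Proof. by move=> H; case: ifP => // /eqP E; lia. Qed.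
Definition P0 (u : loop) : loop := Loop (@P0_topP u).

Definition pi_coef (j k : 'I_N) : R :=
  if (k < j)%N then 1 else if (j < k)%N then -1 else 0.

Definition Pimx (M : 'M[R]_N) : 'M[R]_N :=
  \matrix_(k, l) (if k == l then \sum_j pi_coef j k * M j j else 0).

Lemma Pi_topP (u : loop) (p : int) :
  0 < p -> (if p == 0 then Pimx (coef u 0) else 0) = 0.
Proof. by move=> H; case: ifP => // /eqP E; lia. Qed.
Definition Pi (u : loop) : loop := Loop (@Pi_topP u).

Definition op := loop -> loop.

Definition R0 : op := fun u => ladd (Pplus u) (lopp (Pminus u)).
Definition opA : op := fun u => lscale (2%:R^-1) (ladd (R0 u) (Pi u)).
Definition opD : op := fun u => lscale (2%:R^-1) (ladd (R0 u) (lopp (Pi u))).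
Definition opB : op := fun u => lscale (2%:R^-1) (ladd (P0 u) (lopp (Pi u))).
Definition opC : op := fun u => lscale (2%:R^-1) (ladd (P0 u) (Pi u)).
Definition opN (X : op) : op := fun u => lopp (X u).

Definition loop2 := 'I_2 -> loop.
Definition in_g2 (x : loop2) : Prop := forall k, twisted (x k).
Definition form2 (x y : loop2) : R := \sum_(k < 2) form (x k) (y k).

Definition mx2 (X00 X01 X10 X11 : op) : 'I_2 -> 'I_2 -> op :=
  fun i j => if i == ord0 then (if j == ord0 then X00 else X01)
             else (if j == ord0 then X10 else X11).

(* PB(A,B,C,D) evaluated at the point L on functions Phi, Psi whose         *)
(* gradients at L are X = grad Phi(L), Y = grad Psi(L):                     *)
(*   d_j Phi = L_j X_j ,  d'_j Phi = X_j L_j.                               *)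
Definition PB (A B C D : 'I_2 -> 'I_2 -> op) (L X Y : loop2) : R :=
  \sum_(i < 2) \sum_(j < 2)
    ( form (A i j (lmul (X j) (L j))) (lmul (Y i) (L i))
    - form (D i j (lmul (L j) (X j))) (lmul (L i) (Y i))
    + form (B i j (lmul (L j) (X j))) (lmul (Y i) (L i))
    - form (C i j (lmul (X j) (L j))) (lmul (L i) (Y i))).

Definition bA := mx2 opA (opN opB) opC opA.
Definition bB := mx2 opB opB opB (opN opC).
Definition bC := mx2 opC opC opC (opN opB).
Definition bD := mx2 opD (opN opC) opB opD.

(* T is (the value at L of) the Hamiltonian vector field of a function whose *)
(* gradient at L is X:  d Psi (T) = << grad Psi, T >> = {Phi, Psi}(L).        *)
Definition ham_vf (br : loop2 -> loop2 -> loop2 -> R) (L X T : loop2) : Prop :=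
  forall Y, in_g2 Y -> br L X Y = form2 Y T.

Definition poisson_submanifold (br : loop2 -> loop2 -> loop2 -> R)
    (S : loop2 -> Prop) (Tan : loop2 -> loop2 -> Prop) : Prop :=
  forall L, S L -> forall X, in_g2 X ->
    exists T, in_g2 T /\ ham_vf br L X T /\ Tan L T.

Definition shiftdn : 'M[R]_N := \matrix_(i, j) ((i == ordS j)%:R).
Definition diagv (u : 'I_N -> R) : 'M[R]_N := \matrix_(i, j) ((i == j)%:R * u i).
Definition shiftupv (v : 'I_N -> R) : 'M[R]_N :=
  \matrix_(i, j) (v i * (j == ordS i)%:R).

Lemma lpoly_topP (m1 c0 c1 : 'M[R]_N) (p : int) :
  1 < p -> (if p == 1 then c1 else if p == 0 then c0 else if p == -1 then m1 else 0) = 0.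
Proof. move=> H; do 3 (case: ifP => [/eqP E|_]; first lia). by []. Qed.
Definition lpoly (m1 c0 c1 : 'M[R]_N) : loop := Loop (@lpoly_topP m1 c0 c1).

Definition Umat (u : 'I_N -> R) : loop := lpoly 0 (diagv u) shiftdn.
Definition Vmat (v : 'I_N -> R) : loop := lpoly (shiftupv v) 1%:M 0.

Definition inUV (L : loop2) : Prop :=
  exists u v : 'I_N -> R, forall p,
    coef (L ord0) p = coef (Umat u) p /\ coef (L (@Ordinal 2 1 isT)) p = coef (Vmat v) p.

(* Its tangent space at any point: derivatives d/dt (U(u + t a), V(v + t b)) *)
(*   = (sum_k a_k E_kk, lambda^{-1} sum_k b_k E_{k,k+1}).                    *)
Definition tanUV (L T : loop2) : Prop :=
  exists a b : 'I_N -> R, forall p,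
    coef (T ord0) p = coef (lpoly 0 (diagv a) 0) p /\
    coef (T (@Ordinal 2 1 isT)) p = coef (lpoly (shiftupv b) 0 0) p.

End Loop.

(* At L = (U, V) put alpha_i = sum_j (A_ij d'_j Phi + B_ij d_j Phi) and
   delta_i = sum_j (D_ij d_j Phi + C_ij d'_j Phi).  The trace form is invariant,
   <a, y l> = <l a, y> and <a, l y> = <a l, y> for the Laurent polynomials
   l = U, V, hence {Phi, Psi}(L) = sum_i <L_i alpha_i - delta_i L_i, grad_i Psi>.
   Off degree 0, B and C vanish while A and D act as sign(p)/2.  The degree r
   coefficient of L_i alpha_i - delta_i L_i only involves degrees r, r - 1 (for
   U) or r, r + 1 (for V); when both are nonzero of the same sign, it is
   sign(r)/2 times that of U (X_0 U) - (U X_0) U = 0, resp. of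
   V (X_1 V) - (V X_1) V = 0.  The same holds for V in degree 0, where
   alpha_1 - delta_1 is half of [X_1, V].  What survives is the degree 0 part for
   U, the degree -1 part for V, and the degree 1 part for U, whose subdiagonal
   (Pi(E)_kk - Pi(E)_{k+1,k+1} - E_kk - E_{k+1,k+1}) / 2, with E the degree 0
   part of [X_0, U] + [X_1, V], vanishes since
   Pi(E)_kk - Pi(E)_{k+1,k+1} = E_kk + E_{k+1,k+1} - 2 [k = N - 1] tr E
   and tr E = 0.  A twisted grad Psi only sees the diagonal of the degree 0 part
   for U and the superdiagonal of the degree -1 part for V, and these form a
   tangent vector to the set of pairs (U, V). *)

From Pilot Require Import Defs.
From mathcomp Require Import all_boot all_order all_algebra.
From mathcomp Require Import zify ring.
From mathcomp Require Import reals.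
Set Implicit Arguments. Unset Strict Implicit. Unset Printing Implicit Defensive.
Import Order.TTheory GRing.Theory Num.Theory.
Local Open Scope ring_scope.

(* A bare [form] would refer to MathComp's sesquilinear forms. *)
Local Notation form := Defs.form.
Local Notation i1 := (@Ordinal 2 1 isT).

Lemma ord2P (i : 'I_2) : i = ord0 \/ i = i1.
Proof. by case: i => -[|[|//]] hi; [left|right]; apply: val_inj. Qed.

Lemma lift0_ord0 : lift ord0 ord0 = i1 :> 'I_2.
Proof. exact: val_inj. Qed.

Lemma gez0_tnat (z : int) : 0 <= z -> (tnat z)%:Z = z.
Proof. by case: z. Qed.

Lemma lez0_tnat (z : int) : z <= 0 -> tnat z = 0%N.
Proof. by case: z => [n|n] //=; rewrite lez_nat leqn0 => /eqP. Qed.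

Lemma le_tnat (z : int) : z <= (tnat z)%:Z.
Proof. by case: z. Qed.

Section IntervalSum.
Variable V : zmodType.
Implicit Types (f : int -> V) (a : int) (n : nat).

Definition isum f a n : V := \sum_(k < n) f (a + k%:Z).

Definition vanishes_off f a n : Prop :=
  forall q, q < a \/ a + n%:Z <= q -> f q = 0.

Lemma isum0 f a : isum f a 0 = 0.
Proof. exact: big_ord0. Qed.

Lemma isumSl f a n : isum f a n.+1 = f a + isum f (a + 1) n.
Proof.
rewrite /isum big_ord_recl addr0; congr (_ + _).
by apply: eq_bigr => k _; congr f; rewrite /= /bump add1n; lia.
Qed.

Lemma isumSr f a n : isum f a n.+1 = isum f a n + f (a + n%:Z).
Proof. by rewrite /isum big_ord_recr. Qed.

Lemma eq_isum f g a n : f =1 g -> isum f a n = isum g a n.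
Proof. by move=> fg; apply: eq_bigr => k _; apply: fg. Qed.

Lemma isumD f g a n : isum (fun r => f r + g r) a n = isum f a n + isum g a n.
Proof. exact: big_split. Qed.

Lemma isum_shift f s a n : isum (fun r => f (r + s)) a n = isum f (a + s) n.
Proof. by apply: eq_bigr => k _; congr f; lia. Qed.

Lemma isum_widen f a n i j : vanishes_off f a n ->
  isum f a n = isum f (a - i%:Z) (i + n + j).
Proof.
move=> f0.
have -> : isum f a n = isum f a (n + j).
  elim: j => [|j IH]; first by rewrite addn0.
  by rewrite addnS isumSr f0 ?addr0 //; right; lia.
elim: i => [|i ->]; first by rewrite subr0.
rewrite [(i.+1 + n + j)%N]addSn isumSl f0 ?add0r; last by left; lia.
by congr isum; lia.
Qed.

Lemma isum_window f a n b m :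
  vanishes_off f a n -> vanishes_off f b m -> isum f a n = isum f b m.
Proof.
move=> fa fb; set c := Num.min a b; set e := Num.max (a + n%:Z) (b + m%:Z).
rewrite (isum_widen (tnat (a - c)) (tnat (e - a - n%:Z)) fa).
rewrite (isum_widen (tnat (b - c)) (tnat (e - b - m%:Z)) fb).
have ca : 0 <= a - c by rewrite /c; lia.
have cb : 0 <= b - c by rewrite /c; lia.
have ea : 0 <= e - a - n%:Z by rewrite /e; lia.
have eb : 0 <= e - b - m%:Z by rewrite /e; lia.
congr isum; first by rewrite !gez0_tnat //; lia.
by apply/eqP; rewrite -eqz_nat !PoszD !gez0_tnat //; apply/eqP; lia.
Qed.

End IntervalSum.

Section LoopAlgebra.
Variables (R : fieldType) (N : nat).
Implicit Types (u v x y l : loop R N) (p q r : int).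

Lemma coef_ladd u v p : coef (ladd u v) p = coef u p + coef v p.
Proof. by []. Qed.

Lemma coef_lopp u p : coef (lopp u) p = - coef u p.
Proof. by []. Qed.

Lemma top_lmul u v : top (lmul u v) = top u + top v.
Proof. by []. Qed.

Lemma coef_mul_top u v r q : top u < r \/ top v < q -> coef u r *m coef v q = 0.
Proof. by case=> /topP ->; rewrite ?mul0mx ?mulmx0. Qed.

Lemma coef_lmul_isum u v p a n :
  vanishes_off (fun r => coef u r *m coef v (p - r)) a n ->
  coef (lmul u v) p = isum (fun r => coef u r *m coef v (p - r)) a n.
Proof.
move=> uv0; rewrite /= /mul_coef; set n0 := tnat _.
have n0E : n0%:Z = Num.max 0 (top u + top v - p + 1).
  by rewrite /n0; case: lerP => h; [rewrite gez0_tnat | rewrite lez0_tnat]; lia.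
rewrite (reindex_inj rev_ord_inj) /=.
transitivity (isum (fun r => coef u r *m coef v (p - r)) (p - top v) n0).
  by apply: eq_bigr => k _; congr (coef u _ *m coef v _); have := ltn_ord k; lia.
by apply: isum_window => // r hr; apply: coef_mul_top; lia.
Qed.

Lemma coef_lmul_lpolyr u l m1 c0 c1 q : coef l =1 coef (lpoly m1 c0 c1) ->
  coef (lmul u l) q = coef u q *m c0 + coef u (q - 1) *m c1 + coef u (q + 1) *m m1.
Proof.
move=> ll; rewrite (@coef_lmul_isum _ _ _ (q - 1) 3).
  rewrite /isum !big_ord_recr big_ord0 /= !ll /= add0r.
  have -> : q - (q - 1 + 0%:Z) = 1 by lia.
  have -> : q - (q - 1 + 1%:Z) = 0 by lia.
  have -> : q - (q - 1 + 2%:Z) = -1 by lia.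
  have -> : q - 1 + 1%:Z = q by lia.
  have -> : q - 1 + 2%:Z = q + 1 by lia.
  by rewrite addr0 /= [_ + coef u q *m c0]addrC.
move=> r hr; rewrite ll /=.
by rewrite !ifF ?mulmx0 //; apply/eqP; lia.
Qed.

Lemma coef_lmul_lpolyl u l m1 c0 c1 q : coef l =1 coef (lpoly m1 c0 c1) ->
  coef (lmul l u) q = c0 *m coef u q + c1 *m coef u (q - 1) + m1 *m coef u (q + 1).
Proof.
move=> ll; rewrite (@coef_lmul_isum _ _ _ (-1) 3).
  rewrite /isum !big_ord_recr big_ord0 /= !ll /= add0r.
  have -> : -1 + 0%:Z = -1 by [].
  have -> : -1 + 1%:Z = 0 by [].
  have -> : -1 + 2%:Z = 1 by [].
  rewrite /= subr0 opprK.
  by rewrite [RHS]addrC addrA.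
move=> r hr; rewrite ll /=.
by rewrite !ifF ?mul0mx //; apply/eqP; lia.
Qed.

Lemma form_isum u v a n :
  vanishes_off (fun r => coef u r *m coef v (- r)) a n ->
  form u v = isum (fun r => \tr (coef u r *m coef v (- r))) a n.
Proof.
move=> uv0; rewrite /form (@coef_lmul_isum _ _ _ a n).
  by rewrite /isum raddf_sum; apply: eq_bigr => k _; rewrite sub0r.
by move=> r hr; rewrite sub0r; apply: uv0.
Qed.

Lemma form_isum_top u v a n : a <= - top v -> top u < a + n%:Z ->
  form u v = isum (fun r => \tr (coef u r *m coef v (- r))) a n.
Proof. by move=> ha hn; apply: form_isum => r hr; apply: coef_mul_top; lia. Qed.

Lemma form_isum_sym u v (M : nat) : top u <= M%:Z -> top v <= M%:Z ->
  form u v = isum (fun r => \tr (coef u r *m coef v (- r))) (- M%:Z) (M + M).+1.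
Proof. by move=> hu hv; apply: form_isum_top; lia. Qed.

Lemma form_ladd u v y : form (ladd u v) y = form u y + form v y.
Proof.
set n := (tnat (Num.max (top u) (top v) + top y)).+1.
have := le_tnat (Num.max (top u) (top v) + top y); rewrite -/n => hn.
rewrite !(@form_isum_top _ _ (- top y) n) /=; try lia.
by rewrite -isumD; apply: eq_isum => r; rewrite mulmxDl mxtraceD.
Qed.

Lemma form_lopp u y : form (lopp u) y = - form u y.
Proof.
set n := (tnat (top u + top y)).+1.
have := le_tnat (top u + top y); rewrite -/n => hn.
rewrite !(@form_isum_top _ _ (- top y) n) /=; try lia.
apply/eqP; rewrite -addr_eq0 -isumD; apply/eqP/big1 => k _.
by rewrite /= mulNmx raddfN addNr.
Qed.

Lemma isum_coef_shift (F : 'M[R]_N -> 'M[R]_N -> R) x y s (M : nat) :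
  (forall m, F 0 m = 0) -> (forall m, F m 0 = 0) ->
  -1 <= s <= 1 -> top x < M%:Z -> top y < M%:Z ->
  isum (fun r => F (coef x r) (coef y (- r - s))) (- M%:Z) (M + M).+1 =
  isum (fun r => F (coef x (r - s)) (coef y (- r))) (- M%:Z) (M + M).+1.
Proof.
move=> F0l F0r hs hx hy.
set f := fun r => F (coef x r) (coef y (- r - s)).
have f0 a n : a <= - top y - s -> top x < a + n%:Z -> vanishes_off f a n.
  move=> ha hn q hq; case: (ltrP (top x) q) => hxq; first by rewrite /f (topP hxq).
  by rewrite /f (@topP _ _ y) ?F0r //; lia.
rewrite [RHS](@eq_isum _ _ (fun r => f (r + - s))); last first.
  by move=> r; rewrite /f; congr (F _ (coef y _)); lia.
by rewrite isum_shift; apply: isum_window; apply: f0; lia.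
Qed.

Lemma form_lmul_lpolyr x y l m1 c0 c1 : coef l =1 coef (lpoly m1 c0 c1) ->
  form x (lmul y l) = form (lmul l x) y.
Proof.
move=> ll; pose M := (tnat (top x) + tnat (top y) + tnat (top l)).+1.
have hM : M%:Z = (tnat (top x))%:Z + (tnat (top y))%:Z + (tnat (top l))%:Z + 1.
  by rewrite /M; lia.
have hx := le_tnat (top x); have hy := le_tnat (top y); have hl := le_tnat (top l).
rewrite !(form_isum_sym (M := M)) ?top_lmul; try lia.
under eq_isum do rewrite (coef_lmul_lpolyr _ _ ll) !mulmxDr !mxtraceD !mulmxA.
under [RHS]eq_isum do rewrite (coef_lmul_lpolyl _ _ ll) !mulmxDl !mxtraceD.
rewrite !isumD; congr (_ + _ + _).
- by apply: eq_isum => r; rewrite mxtrace_mulC mulmxA.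
- rewrite (@isum_coef_shift (fun a b => \tr (a *m b *m c1)) x y 1 M) => [|m|m|||];
    rewrite ?mulmx0 ?mul0mx ?mxtrace0 //; try lia.
  by apply: eq_isum => r; rewrite mxtrace_mulC mulmxA.
- rewrite (@isum_coef_shift (fun a b => \tr (a *m b *m m1)) x y (-1) M) => [|m|m|||];
    rewrite ?mulmx0 ?mul0mx ?mxtrace0 //; try lia.
  by apply: eq_isum => r; rewrite opprK mxtrace_mulC mulmxA.
Qed.

Lemma form_lmul_lpolyl x y l m1 c0 c1 : coef l =1 coef (lpoly m1 c0 c1) ->
  form x (lmul l y) = form (lmul x l) y.
Proof.
move=> ll; pose M := (tnat (top x) + tnat (top y) + tnat (top l)).+1.
have hM : M%:Z = (tnat (top x))%:Z + (tnat (top y))%:Z + (tnat (top l))%:Z + 1.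
  by rewrite /M; lia.
have hx := le_tnat (top x); have hy := le_tnat (top y); have hl := le_tnat (top l).
rewrite !(form_isum_sym (M := M)) ?top_lmul; try lia.
under eq_isum do rewrite (coef_lmul_lpolyl _ _ ll) !mulmxDr !mxtraceD !mulmxA.
under [RHS]eq_isum do rewrite (coef_lmul_lpolyr _ _ ll) !mulmxDl !mxtraceD.
rewrite !isumD; congr (_ + _ + _).
- apply: (@isum_coef_shift (fun a b => \tr (a *m c1 *m b)) x y 1 M) => [m|m|||];
    by rewrite ?mulmx0 ?mul0mx ?mxtrace0 //; lia.
- rewrite (@isum_coef_shift (fun a b => \tr (a *m m1 *m b)) x y (-1) M) => [|m|m|||];
    by rewrite ?mulmx0 ?mul0mx ?mxtrace0 //; lia.
Qed.

Lemma coef_lmul_lpolyA x l m1 c0 c1 r : coef l =1 coef (lpoly m1 c0 c1) ->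
  coef (lmul l (lmul x l)) r = coef (lmul (lmul l x) l) r.
Proof.
move=> ll; rewrite (coef_lmul_lpolyl _ _ ll) (coef_lmul_lpolyr _ _ ll).
rewrite !(coef_lmul_lpolyr _ _ ll) !(coef_lmul_lpolyl _ _ ll).
rewrite !mulmxDr !mulmxDl !mulmxA !subrK !addrK.
by rewrite [LHS](AC (3*3*3) ((1*4*7)*(2*5*8)*(3*6*9))).
Qed.

Lemma mxtrace_coef_lmul_lpolyC x l m1 c0 c1 q : coef l =1 coef (lpoly m1 c0 c1) ->
  \tr (coef (lmul x l) q) = \tr (coef (lmul l x) q).
Proof.
move=> ll; rewrite (coef_lmul_lpolyr _ _ ll) (coef_lmul_lpolyl _ _ ll) !mxtraceD.
by rewrite !(mxtrace_mulC c0) !(mxtrace_mulC c1) !(mxtrace_mulC m1).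
Qed.

End LoopAlgebra.

Section Operators.
Variables (R : fieldType) (N : nat).
Implicit Types (z : loop R N) (q : int).

(* The value at q = 0 is junk: it is only used in nonzero degrees. *)
Definition half_sign q : R := if 0 < q then 2%:R^-1 else - 2%:R^-1.

Lemma half_sign_eq q q' : 0 < q * q' -> half_sign q = half_sign q'.
Proof.
by move=> qq; rewrite /half_sign; case: ltrP => ?; case: ltrP => ? //; exfalso; nia.
Qed.

Lemma coef_opA_nz z q : q != 0 -> coef (opA z) q = half_sign q *: coef z q.
Proof.
move=> q0; rewrite /= (negbTE q0) addr0 /half_sign.
have [hq|hq] : 0 < q \/ q < 0 by lia.
  by rewrite hq (lt_gtF hq) oppr0 addr0.
by rewrite hq (lt_gtF hq) add0r scaleNr scalerN.
Qed.

Lemma coef_opD_nz z q : q != 0 -> coef (opD z) q = half_sign q *: coef z q.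
Proof.
move=> q0; rewrite /= (negbTE q0) oppr0 addr0 /half_sign.
have [hq|hq] : 0 < q \/ q < 0 by lia.
  by rewrite hq (lt_gtF hq) oppr0 addr0.
by rewrite hq (lt_gtF hq) add0r scaleNr scalerN.
Qed.

Lemma coef_opB_nz z q : q != 0 -> coef (opB z) q = 0.
Proof. by move=> q0; rewrite /= (negbTE q0) oppr0 addr0 scaler0. Qed.

Lemma coef_opC_nz z q : q != 0 -> coef (opC z) q = 0.
Proof. by move=> q0; rewrite /= (negbTE q0) addr0 scaler0. Qed.

Lemma coef_opA0 z : coef (opA z) 0 = 2%:R^-1 *: Pimx (coef z 0).
Proof. by rewrite /= subrr add0r. Qed.

Lemma coef_opD0 z : coef (opD z) 0 = - (2%:R^-1 *: Pimx (coef z 0)).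
Proof. by rewrite /= subrr add0r scalerN. Qed.

Lemma coef_opB0 z : coef (opB z) 0 = 2%:R^-1 *: (coef z 0 - Pimx (coef z 0)).
Proof. by []. Qed.

Lemma coef_opC0 z : coef (opC z) 0 = 2%:R^-1 *: (coef z 0 + Pimx (coef z 0)).
Proof. by []. Qed.

End Operators.
Arguments half_sign {R} q.

Section HamiltonianField.
Variables (R : fieldType) (N : nat).
Implicit Types (L X Y x y : loop2 R N) (P Q A B C D : 'I_2 -> 'I_2 -> op R N).

Definition lcomb P Q x y (i : 'I_2) : loop R N :=
  ladd (ladd (P i ord0 (x ord0)) (Q i ord0 (y ord0)))
       (ladd (P i i1 (x i1)) (Q i i1 (y i1))).

Definition dgrad L X : loop2 R N := fun j => lmul (L j) (X j).
Definition dgrad' L X : loop2 R N := fun j => lmul (X j) (L j).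

Definition ham_field A B C D L X (i : 'I_2) : loop R N :=
  ladd (lmul (L i) (lcomb A B (dgrad' L X) (dgrad L X) i))
       (lopp (lmul (lcomb D C (dgrad L X) (dgrad' L X) i) (L i))).

Lemma form_lcomb P Q x y i z :
  form (lcomb P Q x y i) z = \sum_(j < 2) (form (P i j (x j)) z + form (Q i j (y j)) z).
Proof. by rewrite !form_ladd big_ord_recl big_ord1 lift0_ord0. Qed.

Lemma PB_ham_field A B C D L X Y :
  (forall i, exists m1 c0 c1, coef (L i) =1 coef (lpoly m1 c0 c1)) ->
  PB A B C D L X Y = \sum_(i < 2) form (ham_field A B C D L X i) (Y i).
Proof.
move=> hL; apply: eq_bigr => i _; have [m1 [c0 [c1 ll]]] := hL i.
rewrite form_ladd form_lopp -(form_lmul_lpolyr _ _ ll) -(form_lmul_lpolyl _ _ ll).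
by rewrite !form_lcomb -sumrB; apply: eq_bigr => j _; rewrite /dgrad /dgrad'; ring.
Qed.

End HamiltonianField.

Section CyclicIndices.
Variable N : nat.
Implicit Types i j k : 'I_N.

Lemma val_ordS k : (ordS k : nat) = if k.+1 == N then 0%N else k.+1.
Proof.
rewrite /=; case: eqP => [->|hk]; first by rewrite modnn.
by rewrite modn_small //; have := ltn_ord k; lia.
Qed.

Lemma dvdz_ord_sub i j : (N%:Z %| i%:Z - j%:Z)%Z = (i == j).
Proof.
apply/idP/eqP => [/dvdzP [c hc] | ->]; last by rewrite subrr dvdz0.
have hi := ltn_ord i; have hj := ltn_ord j.
have c_le0 : c <= 0 by nia.
have c_ge0 : 0 <= c by nia.
have c0 : c = 0 by lia.
by move: hc; rewrite c0 mul0r => hc; apply: val_inj => /=; lia.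
Qed.

Lemma dvdz_ord_subS i j : (N%:Z %| i%:Z - j%:Z - 1)%Z = (i == ordS j).
Proof.
have hi := ltn_ord i; have hj := ltn_ord j.
apply/idP/eqP => [/dvdzP [c hc] | ->].
  have c_le0 : c <= 0 by nia.
  have c_geN1 : -1 <= c by nia.
  apply: val_inj => /=; rewrite -[(_ %% N)%N]/(ordS j : nat) val_ordS.
  have [c0|cN1] : c = 0 \/ c = -1 by lia.
    by move: hc; rewrite c0 mul0r; case: ifP => /eqP; lia.
  by move: hc; rewrite cN1 mulN1r; case: ifP => /eqP; lia.
apply/dvdzP; rewrite val_ordS; case: ifP => /eqP hj1; [exists (-1) | exists 0]; lia.
Qed.

Lemma dvdz_ord_subNS i j : (N%:Z %| i%:Z - j%:Z - -1)%Z = (j == ordS i).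
Proof.
have -> : i%:Z - j%:Z - -1 = - (j%:Z - i%:Z - 1) by ring.
by rewrite dvdzE abszN -dvdzE dvdz_ord_subS.
Qed.

End CyclicIndices.

Section ShiftAndPi.
Variables (R : fieldType) (N : nat).
Implicit Types (A M Y : 'M[R]_N) (i j k : 'I_N).
Local Notation S := (shiftdn R N).

Lemma shiftdn_mulmx M k j : (S *m M) (ordS k) j = M k j.
Proof.
rewrite mxE (bigD1 k) //= big1 ?addr0 => [|m km]; rewrite mxE ?eqxx ?mul1r //.
by rewrite (inj_eq (@ordS_inj N)) eq_sym (negbTE km) mul0r.
Qed.

Lemma mulmx_shiftdn M i j : (M *m S) i j = M i (ordS j).
Proof.
rewrite mxE (bigD1 (ordS j)) //= big1 ?addr0 => [|m mj]; rewrite mxE ?eqxx ?mulr1 //.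
by rewrite (negbTE mj) mulr0.
Qed.

Lemma shiftdn_commutator_subdiag M M' k :
  (S *m M - M' *m S) (ordS k) k = M k k - M' (ordS k) (ordS k).
Proof. by rewrite mxE [X in _ + X]mxE shiftdn_mulmx mulmx_shiftdn. Qed.

Lemma mxtrace_mulmx_supp M Y (s : 'I_N -> 'I_N) :
  (forall i j, j != s i -> M i j = 0) -> \tr (M *m Y) = \sum_i M i (s i) * Y (s i) i.
Proof.
move=> Ms; apply: eq_bigr => i _; rewrite mxE (bigD1 (s i)) //= big1 ?addr0 // => j js.
by rewrite Ms ?mul0r.
Qed.

Lemma pi_coef_ordS j k : pi_coef R j k - pi_coef R j (ordS k) =
  (j == k)%:R + (j == ordS k)%:R - (k.+1 == N)%:R * 2%:R :> R.
Proof.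
rewrite /pi_coef -!val_eqE /= -[(_ %% N)%N]/(ordS k : nat) val_ordS.
have hj := ltn_ord j; have hk := ltn_ord k.
by case: eqP => kN; do ![case: ifP => ?]; do ![case: eqP => ?]; try lia; simpl; ring.
Qed.

Lemma Pimx_ordS A k : Pimx A k k =
  Pimx A (ordS k) (ordS k) + A k k + A (ordS k) (ordS k) - (k.+1 == N)%:R * 2%:R * \tr A.
Proof.
have -> : Pimx A k k =
    Pimx A (ordS k) (ordS k) + \sum_j (pi_coef R j k - pi_coef R j (ordS k)) * A j j.
  by rewrite !mxE !eqxx -big_split; apply: eq_bigr => j _ /=; ring.
rewrite -!addrA; congr (_ + _).
under eq_bigr do rewrite pi_coef_ordS !mulrBl mulrDl.
rewrite sumrB big_split /= -mulr_sumr.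
rewrite (bigD1 k) //= big1 ?addr0 => [|j /negbTE ->]; last by rewrite mul0r.
rewrite (bigD1 (ordS k)) //= big1 ?addr0 => [|j /negbTE ->]; last by rewrite mul0r.
by rewrite !eqxx !mul1r addrA.
Qed.

End ShiftAndPi.

Section Twisted.
Variables (R : fieldType) (N : nat).
Implicit Types (y : loop R N) (i j : 'I_N).

Lemma twisted_coef0 y i j : twisted y -> i != j -> coef y 0 i j = 0.
Proof. by move=> ty ij; apply: ty; rewrite subr0 dvdz_ord_sub; apply/negP. Qed.

Lemma twisted_coef1 y i j : twisted y -> i != ordS j -> coef y 1 i j = 0.
Proof. by move=> ty ij; apply: ty; rewrite dvdz_ord_subS; apply/negP. Qed.

Lemma twisted_coefN1 y i j : twisted y -> j != ordS i -> coef y (-1) i j = 0.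
Proof. by move=> ty ji; apply: ty; rewrite dvdz_ord_subNS; apply/negP. Qed.

Lemma twisted_lpoly_diagv (a : 'I_N -> R) : twisted (lpoly 0 (diagv a) 0).
Proof.
move=> p i j hp /=.
case: eqP => [|_]; first by rewrite mxE.
case: eqP => [p0|_]; last by case: eqP; rewrite ?mxE.
rewrite mxE; case: eqP => [ij|]; last by rewrite mul0r.
by case: hp; rewrite p0 ij subr0 subrr dvdz0.
Qed.

Lemma twisted_lpoly_shiftupv (b : 'I_N -> R) : twisted (lpoly (shiftupv b) 0 0).
Proof.
move=> p i j hp /=.
do 2 (case: eqP => [_|_]; first by rewrite mxE).
case: eqP => [pN1|_]; last by rewrite mxE.
rewrite mxE; case: eqP => [ji|]; last by rewrite mulr0.
by case: hp; rewrite pN1 ji dvdz_ord_subNS.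
Qed.

End Twisted.

Section BoldOperators.
Variables (R : fieldType) (N : nat) (L X : loop2 R N).
Local Notation alpha := (lcomb (@bA R N) (@bB R N) (dgrad' L X) (dgrad L X)).
Local Notation delta := (lcomb (@bD R N) (@bC R N) (dgrad L X) (dgrad' L X)).

Lemma coef_alpha_nz i q : q != 0 -> coef (alpha i) q = half_sign q *: coef (dgrad' L X i) q.
Proof.
move=> q0; have [->|->] := ord2P i; rewrite !coef_ladd ?coef_lopp;
by rewrite ?(coef_opA_nz _ q0) ?(coef_opB_nz _ q0) ?(coef_opC_nz _ q0) ?oppr0 ?addr0 ?add0r.
Qed.

Lemma coef_delta_nz i q : q != 0 -> coef (delta i) q = half_sign q *: coef (dgrad L X i) q.
Proof.
move=> q0; have [->|->] := ord2P i; rewrite !coef_ladd ?coef_lopp;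
by rewrite ?(coef_opD_nz _ q0) ?(coef_opB_nz _ q0) ?(coef_opC_nz _ q0) ?oppr0 ?addr0 ?add0r.
Qed.

Lemma coef_alpha_sub_delta1_0 : coef (alpha i1) 0 - coef (delta i1) 0 =
  2%:R^-1 *: (coef (dgrad' L X i1) 0 - coef (dgrad L X i1) 0).
Proof.
rewrite !coef_ladd !coef_lopp !coef_opA0 !coef_opB0 !coef_opC0 !coef_opD0.
by apply/matrixP => i j; rewrite !mxE; ring.
Qed.

End BoldOperators.

Section LaxPair.
Variables (R : fieldType) (N : nat) (u v : 'I_N -> R) (L X : loop2 R N).
Hypothesis hU : coef (L ord0) =1 coef (Umat u).
Hypothesis hV : coef (L i1) =1 coef (Vmat v).
Local Notation S := (shiftdn R N).
Local Notation W := (shiftupv v).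
Local Notation T := (ham_field (@bA R N) (@bB R N) (@bC R N) (@bD R N) L X).
Local Notation alpha := (lcomb (@bA R N) (@bB R N) (dgrad' L X) (dgrad L X)).
Local Notation delta := (lcomb (@bD R N) (@bC R N) (dgrad L X) (dgrad' L X)).

Lemma coef_ham_fieldU r : coef (T ord0) r =
  diagv u *m coef (alpha ord0) r + S *m coef (alpha ord0) (r - 1)
  - (coef (delta ord0) r *m diagv u + coef (delta ord0) (r - 1) *m S).
Proof.
rewrite coef_ladd coef_lopp (coef_lmul_lpolyl _ _ hU) (coef_lmul_lpolyr _ _ hU).
by rewrite mul0mx mulmx0 !addr0.
Qed.

Lemma coef_ham_fieldV r : coef (T i1) r =
  coef (alpha i1) r + W *m coef (alpha i1) (r + 1)
  - (coef (delta i1) r + coef (delta i1) (r + 1) *m W).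
Proof.
rewrite coef_ladd coef_lopp (coef_lmul_lpolyl _ _ hV) (coef_lmul_lpolyr _ _ hV).
by rewrite mul1mx mulmx1 mul0mx mulmx0 !addr0.
Qed.

Lemma lmulU_assoc x r :
  diagv u *m coef (lmul x (L ord0)) r + S *m coef (lmul x (L ord0)) (r - 1) =
  coef (lmul (L ord0) x) r *m diagv u + coef (lmul (L ord0) x) (r - 1) *m S.
Proof.
have := coef_lmul_lpolyA x r hU.
rewrite (coef_lmul_lpolyl (lmul x (L ord0)) _ hU) (coef_lmul_lpolyr (lmul (L ord0) x) _ hU).
by rewrite mul0mx mulmx0 !addr0.
Qed.

Lemma lmulV_assoc x r :
  coef (lmul x (L i1)) r + W *m coef (lmul x (L i1)) (r + 1) =
  coef (lmul (L i1) x) r + coef (lmul (L i1) x) (r + 1) *m W.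
Proof.
have := coef_lmul_lpolyA x r hV.
rewrite (coef_lmul_lpolyl (lmul x (L i1)) _ hV) (coef_lmul_lpolyr (lmul (L i1) x) _ hV).
by rewrite mul1mx mulmx1 mul0mx mulmx0 !addr0.
Qed.

Lemma coef_ham_fieldU_nz r : r != 0 -> r != 1 -> coef (T ord0) r = 0.
Proof.
move=> r0 r1; have r10 : r - 1 != 0 by lia.
rewrite coef_ham_fieldU !coef_alpha_nz ?coef_delta_nz // (@half_sign_eq _ (r - 1) r);
  last by nia.
by rewrite -!scalemxAr -!scalemxAl -!scalerDr -scalerBr lmulU_assoc subrr scaler0.
Qed.

Lemma coef_ham_fieldV_nz r : r != -1 -> coef (T i1) r = 0.
Proof.
move=> rN1; have r10 : r + 1 != 0 by lia.
have sub_r : coef (alpha i1) r - coef (delta i1) r =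
    half_sign (r + 1) *: (coef (dgrad' L X i1) r - coef (dgrad L X i1) r).
  have [->|r0] := eqVneq r 0; first by rewrite coef_alpha_sub_delta1_0.
  by rewrite coef_alpha_nz ?coef_delta_nz // (@half_sign_eq _ r (r + 1)) ?scalerBr //; nia.
rewrite coef_ham_fieldV opprD addrACA sub_r !coef_alpha_nz ?coef_delta_nz //.
rewrite -scalemxAr -scalemxAl -scalerBr -scalerDr addrACA -opprD.
by rewrite lmulV_assoc subrr scaler0.
Qed.

Lemma coef_ham_fieldU1 : coef (T ord0) 1 =
  S *m (coef (alpha ord0) 0 - 2%:R^-1 *: coef (dgrad' L X ord0) 0)
  - (coef (delta ord0) 0 - 2%:R^-1 *: coef (dgrad L X ord0) 0) *m S.
Proof.
(* U (X U) = (U X) U in degree 1 trades the diagonal terms for shift terms. *)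
have assoc := lmulU_assoc (X ord0) 1; rewrite subrr in assoc.
have diagv_a1 : diagv u *m coef (dgrad' L X ord0) 1 =
    coef (dgrad L X ord0) 1 *m diagv u + coef (dgrad L X ord0) 0 *m S
    - S *m coef (dgrad' L X ord0) 0.
  by rewrite /dgrad /dgrad' -assoc addrK.
have one0 : (1 : int) != 0 by [].
rewrite coef_ham_fieldU subrr (coef_alpha_nz L X ord0 one0) (coef_delta_nz L X ord0 one0).
rewrite /half_sign ltr01 -scalemxAr -scalemxAl diagv_a1.
rewrite !mulmxBr !mulmxBl -!scalemxAr -!scalemxAl.
by apply/matrixP => i j; rewrite !mxE; ring.
Qed.

Lemma coef_ham_fieldU1_subdiag k : coef (T ord0) 1 (ordS k) k = 0.
Proof.
rewrite coef_ham_fieldU1 shiftdn_commutator_subdiag.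
rewrite !coef_ladd !coef_lopp !coef_opA0 !coef_opB0 !coef_opC0 !coef_opD0 /dgrad /dgrad'.
have tr0 := mxtrace_coef_lmul_lpolyC (X ord0) 0 hU.
have tr1 := mxtrace_coef_lmul_lpolyC (X i1) 0 hV.
have pa0 := Pimx_ordS (coef (lmul (X ord0) (L ord0)) 0) k.
have pb0 := Pimx_ordS (coef (lmul (L ord0) (X ord0)) 0) k.
have pa1 := Pimx_ordS (coef (lmul (X i1) (L i1)) 0) k.
have pb1 := Pimx_ordS (coef (lmul (L i1) (X i1)) 0) k.
rewrite !mxE !eqxx in pa0 pb0 pa1 pb1 *.
ring: pa0 pb0 pa1 pb1 tr0 tr1.
Qed.

Lemma form_ham_fieldU y : twisted y ->
  form (T ord0) y = form y (lpoly 0 (diagv (fun k => coef (T ord0) 0 k k)) 0).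
Proof.
move=> ty; rewrite (@form_isum _ _ _ _ 0 2); last first.
  by move=> r hr; rewrite coef_ham_fieldU_nz ?mul0mx //; lia.
rewrite !isumSr isum0 add0r (_ : 0 + 0%:Z = 0) // (_ : 0 + 1%:Z = 1) // oppr0.
rewrite [\tr (coef _ 1 *m _)]mxtrace_mulC (@mxtrace_mulmx_supp _ _ (coef y (-1)) _ (@ordS N)).
  2: by move=> i j; apply: twisted_coefN1.
rewrite big1 ?addr0 => [|i _]; last by rewrite coef_ham_fieldU1_subdiag mulr0.
rewrite /form (coef_lmul_lpolyr _ _ (frefl _)) !mulmx0 !addr0 mxtrace_mulC.
rewrite !(@mxtrace_mulmx_supp _ _ (coef y 0) _ id) => [|i j ji|i j ji];
  try by rewrite twisted_coef0 // eq_sym.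
by apply: eq_bigr => i _; rewrite [diagv _ _ _]mxE eqxx mul1r.
Qed.

Lemma form_ham_fieldV y : twisted y ->
  form (T i1) y = form y (lpoly (shiftupv (fun k => coef (T i1) (-1) k (ordS k))) 0 0).
Proof.
move=> ty; rewrite (@form_isum _ _ _ _ (-1) 1); last first.
  by move=> r hr; rewrite coef_ham_fieldV_nz ?mul0mx //; lia.
rewrite isumSr isum0 add0r (_ : -1 + 0%:Z = -1) // opprK -mxtrace_tr trmx_mul.
rewrite (@mxtrace_mulmx_supp _ _ _ _ (@ordS N)) => [|i j ji]; last first.
  by rewrite mxE twisted_coef1.
rewrite /form (coef_lmul_lpolyr _ _ (frefl _)) !mulmx0 !add0r mxtrace_mulC.
rewrite (@mxtrace_mulmx_supp _ _ _ _ (@ordS N)) => [|i j ji]; last first.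
  by rewrite mxE (negbTE ji) mulr0.
by apply: eq_bigr => i _; rewrite !mxE eqxx mulr1 mulrC.
Qed.

End LaxPair.

Theorem proposition10 (R : realType) (N : nat) :
  (2 <= N)%N ->
  poisson_submanifold
    (PB (@bA R N) (@bB R N) (@bC R N) (@bD R N))
    (@inUV R N) (@tanUV R N).
Proof.
move=> _ L [u [v uvL]] X _.
have hU : coef (L ord0) =1 coef (Umat u) by move=> p; case: (uvL p).
have hV : coef (L i1) =1 coef (Vmat v) by move=> p; case: (uvL p).
have hL i : exists m1 c0 c1, coef (L i) =1 coef (lpoly m1 c0 c1).
  by have [->|->] := ord2P i; do 3 eexists; [exact: hU | exact: hV].
set T := ham_field (@bA R N) (@bB R N) (@bC R N) (@bD R N) L X.
set a := fun k => coef (T ord0) 0 k k.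
set b := fun k => coef (T i1) (-1) k (ordS k).
exists (fun k : 'I_2 => if k == ord0 then lpoly 0 (diagv a) 0 else lpoly (shiftupv b) 0 0).
split; [|split]; last by exists a, b.
  by move=> k; case: ifP => _; [apply: twisted_lpoly_diagv | apply: twisted_lpoly_shiftupv].
move=> Y hY; rewrite (PB_ham_field _ _ _ _ _ _ hL) /form2.
rewrite !big_ord_recl !big_ord0 !addr0 lift0_ord0.
by rewrite (form_ham_fieldU X hU hV (hY ord0)) (form_ham_fieldV X hV (hY i1)).
Qed.
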